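(* Every triple in $V(\mathfrak{B})$ is a permutation of one of the following six triples, for some distinct $u,v,w\in U(\mathfrak{B})$. (i) $\langle u,v,w\rangle$ where $\{\langle u,v\rangle,\langle u,w\rangle\}=\Xi(u)$ and $\langle v,w\rangle$ is a $\Xi$-pair, (ii) $\langle u,v,w\rangle$ where $\{\langle u,v\rangle,\langle u,w\rangle\}=\Xi(u)$, and $\langle v,w\rangle$ is a base-pair, (iii) $\langle u,v,w\rangle$ where $\langle u,v\rangle$, $\langle u,w\rangle$, and $\langle v,w\rangle$ are base-pairs, (iv) $\langle u,u,v\rangle$ where $\langle u,v\rangle$ is a $\Xi$-pair, (v) $\langle u,u,v\rangle$ where $\langle u,v\rangle$ is a base-pair, (vi) $\langle u,u,u\rangle$.
   Context: Let $\mathfrak{A}=\langle A,+,\overline{\phantom{x}},;,\breve{\phantom{x}},1'\rangle$ be a complete atomic weakly associative relation algebra with set of atoms $\mathsf{At}\,\mathfrak{A}$, and let $0'=\overline{1'}$. Its suitable structure is $\mathfrak{B}=\langle B,T_\kappa,E_{\kappa\lambda}\rangle_{\kappa,\lambda<3}$, where $B=\{s\in{}^3\mathsf{At}\,\mathfrak{A}: s_2;s_0\geq s_1\}$, $T_\kappa=\{\langle s,t\rangle: s_\kappa=t_\kappa\}$, $E_{\kappa\kappa}=B$, and $E_{\kappa\lambda}=E_{\lambda\kappa}=\{s\in B: s_\mu\leq 1'\}$ whenever $\{\kappa,\lambda,\mu\}=\{0,1,2\}$. $\mathrm{Tr}(\mathfrak{B})$ is the set of all sequences (trails) $p=\langle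 t_0,\kappa_0,\dots,t_n,\kappa_n\rangle$ with $n\in\omega$, $t_0,\dots,t_n\in B$, $\kappa_0,\dots,\kappa_n<3$, and $t_i\neq t_{i+1}$, $t_i\,T_{\kappa_i}\,t_{i+1}$ for all $i<n$; $\kappa_n$ is the pointer of $p$ and $|p|=n+1$ its length. For $\lambda<3$, $p\lambda=\langle t_0,\kappa_0,\dots,t_{n-1},\kappa_{n-1},t_n,\lambda\rangle$. $p$ is reduced if: (a) if $|p|=1$ and $t_0\in E_{\kappa_0\lambda}$ then $\kappa_0\leq\lambda<3$; (b) if $|p|>1$ then $\kappa_{n-1}=\kappa_n$ and for all $\lambda<3$, $t_n\in E_{\kappa_n\lambda}$ iff $\kappa_n=\lambda$; (c) if $0\leq i<|p|-2$ then $t_i\neq t_{i+2}$ or $\kappa_i\neq\kappa_{i+1}$. $\approx$ is the smallest equivalence relation on $\mathrm{Tr}(\mathfrak{B})$ such that (1) $\langle t_0,\kappa_0,\dots,t_i,\lambda,s,\lambda,t_i,\kappa_i,\dots,t_n,\kappa_n\rangle\approx\langle t_0,\kappa_0,\dots,t_i,\kappa_i,\dots,t_n,\kappa_n\rangle$; (2) $\langle t_0,\kappa_0,\dots,t_n,\lambda,s,\kappa_n\rangle\approx\langle t_0,\kappa_0,\dots,t_n,\kappa_n\rangle$ where $\lambda\neq\kappa_n$; (3) $\langle t_0,\kappa_0,\dots,t_n,\lambda\rangle\approx\langle t_0,\kappa_0,\dots,t_n,\kappa_n\rangle$ where $t_n\in E_{\lambda\kappa_n}$. $p^{\mathfrak{B}}$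 is the $\approx$-class of $p$; each class contains a unique reduced trail. $U(\mathfrak{B})=\{p^{\mathfrak{B}}:p\in\mathrm{Tr}(\mathfrak{B})\}$, and for $u\in U(\mathfrak{B})$, $|u|$ is the length of the unique reduced trail in $u$. $V(\mathfrak{B})=\{\langle (p0)^{\mathfrak{B}},(p1)^{\mathfrak{B}},(p2)^{\mathfrak{B}}\rangle: p\in\mathrm{Tr}(\mathfrak{B})\}$ (the triples of trails). For $u\in U(\mathfrak{B})$: if $|u|=1$ then $\Xi(u)=\emptyset$; if $|u|>1$ then $\Xi(u)=\{\langle u,(p\lambda)^{\mathfrak{B}}\rangle,\langle u,(p\mu)^{\mathfrak{B}}\rangle\}$ where $p$ is the unique reduced trail in $u$, $\kappa$ is the pointer of $p$, and $\{\kappa,\lambda,\mu\}=\{0,1,2\}$. A pair $\langle u,v\rangle$ of points is a $\Xi$-pair if $\langle u,v\rangle\in\Xi(u)$ or $\langle v,u\rangle\in\Xi(v)$, and a base-pair if it belongs to $\{\langle (\langle t,\kappa\rangle)^{\mathfrak{B}},(\langle t,\lambda\rangle)^{\mathfrak{B}}\rangle: t\in B,\ t_\mu\leq 0',\ \{\kappa,\lambda,\mu\}=\{0,1,2\}\}$. *)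

From Stdlib Require Import List Arith Relations.
Import ListNotations.

(** * Weakly associative relation algebras (Maddux):
    Tarski's axioms R1-R3, R5-R10 (i.e. all RA axioms except associativity
    of ;) plus the weak associativity law ((1'.x);1);1 = (1'.x);1. *)
Record WA := {
  car :> Type;
  jn : car -> car -> car;
  cm : car -> car;
  cp : car -> car -> car;
  cv : car -> car;
  id' : car;
  wa_R1 : forall x y, jn x y = jn y x;
  wa_R2 : forall x y z, jn x (jn y z) = jn (jn x y) z;
  wa_R3 : forall x y, jn (cm (jn (cm x) y)) (cm (jn (cm x) (cm y))) = x;
  wa_R5 : forall x y z, cp (jn x y) z = jn (cp x z) (cp y z);
  wa_R6 : forall x, cp x id' = x;
  wa_R7 : forall x, cv (cv x) = x;
  wa_R8 : forall x y, cv (jn x y) = jn (cv x) (cv y);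
  wa_R9 : forall x y, cv (cp x y) = cp (cv y) (cv x);
  wa_R10 : forall x y, jn (cp (cv x) (cm (cp x y))) (cm y) = cm y;
  wa_WA : forall x,
    cp (cp (cm (jn (cm id') (cm x))) (jn id' (cm id'))) (jn id' (cm id'))
    = cp (cm (jn (cm id') (cm x))) (jn id' (cm id'))
}.

Arguments jn {w}.
Arguments cm {w}.
Arguments cp {w}.
Arguments cv {w}.
Arguments id' {w}.

Definition le {R : WA} (x y : R) : Prop := jn x y = y.
Definition top {R : WA} : R := jn id' (cm id').
Definition bot {R : WA} : R := cm top.
Definition diff' {R : WA} : R := cm id'.

Definition is_atom {R : WA} (a : R) : Prop :=
  a <> bot /\ forall x, le x a -> x = bot \/ x = a.

Definition complete {R : WA} : Prop :=
  forall S : R -> Prop, exists j : R,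
    (forall x, S x -> le x j) /\ (forall y, (forall x, S x -> le x y) -> le j y).

Definition atomic {R : WA} : Prop :=
  forall x : R, x <> bot -> exists a, is_atom a /\ le a x.

Record CAWA := { wa_of :> WA; cawa_complete : @complete wa_of;
                 cawa_atomic : @atomic wa_of }.

Inductive I3 := i0 | i1 | i2.
Definition I3_to_nat (k : I3) : nat := match k with i0 => 0 | i1 => 1 | i2 => 2 end.
Definition third (k l : I3) : I3 :=
  match k, l with
  | i0, i1 | i1, i0 => i2
  | i0, i2 | i2, i0 => i1
  | i1, i2 | i2, i1 => i0
  | _, _ => k
  end.

Definition inB {R : WA} (s : I3 -> R) : Prop :=
  (forall k, is_atom (s k)) /\ le (s i1) (cp (s i2) (s i0)).

Definition Trel {R : WA} (k : I3) (s t : I3 -> R) : Prop := s k = t k.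

Definition Erel {R : WA} (k l : I3) (s : I3 -> R) : Prop :=
  inB s /\ (k = l \/ (k <> l /\ le (s (third k l)) id')).

(** * Trails, represented as nonempty lists of (t_i, kappa_i) *)
Definition trail (R : WA) := list ((I3 -> R) * I3).

Definition dflt {R : WA} : (I3 -> R) * I3 := (fun _ => id', i0).
Definition tr {R : WA} (p : trail R) (i : nat) : I3 -> R := fst (nth i p dflt).
Definition pt {R : WA} (p : trail R) (i : nat) : I3 := snd (nth i p dflt).

Definition is_trail {R : WA} (p : trail R) : Prop :=
  p <> [] /\
  (forall i, i < length p -> inB (tr p i)) /\
  (forall i, S i < length p ->
     tr p i <> tr p (S i) /\ Trel (pt p i) (tr p i) (tr p (S i))).

Definition pointer {R : WA} (p : trail R) : I3 := pt p (pred (length p)).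

Fixpoint setptr {R : WA} (p : trail R) (l : I3) : trail R :=
  match p with
  | [] => []
  | [(t, _)] => [(t, l)]
  | x :: r => x :: setptr r l
  end.

Definition reduced {R : WA} (p : trail R) : Prop :=
  is_trail p /\
  (length p = 1 -> forall l, Erel (pt p 0) l (tr p 0) ->
       I3_to_nat (pt p 0) <= I3_to_nat l) /\
  (length p > 1 ->
     pt p (length p - 2) = pt p (length p - 1) /\
     forall l, Erel (pt p (length p - 1)) l (tr p (length p - 1)) <->
               pt p (length p - 1) = l) /\
  (forall i, i + 2 < length p -> tr p i <> tr p (i + 2) \/ pt p i <> pt p (i + 1)).

Inductive step {R : WA} : trail R -> trail R -> Prop :=
  | step1 : forall pre post t k l s,
      step (pre ++ [(t, l); (s, l); (t, k)] ++ post) (pre ++ [(t, k)] ++ post)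
  | step2 : forall pre t l s k, l <> k ->
      step (pre ++ [(t, l); (s, k)]) (pre ++ [(t, k)])
  | step3 : forall pre t l k, Erel l k t ->
      step (pre ++ [(t, l)]) (pre ++ [(t, k)]).

Definition tstep {R : WA} (p q : trail R) : Prop :=
  is_trail p /\ is_trail q /\ step p q.

Definition approx {R : WA} (p q : trail R) : Prop :=
  is_trail p /\ is_trail q /\ clos_refl_sym_trans _ tstep p q.

(** points: ~-classes, represented as predicates on trails *)
Definition point (R : WA) := trail R -> Prop.
Definition cls {R : WA} (p : trail R) : point R := fun q => approx p q.

Definition inU {R : WA} (u : point R) : Prop := exists p, is_trail p /\ u = cls p.

Definition inV {R : WA} (x : point R * point R * point R) : Prop :=
  exists p, is_trail p /\
    x = (cls (setptr p i0), cls (setptr p i1), cls (setptr p i2)).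

Definition inXi {R : WA} (u : point R) (x y : point R) : Prop :=
  exists p, reduced p /\ u = cls p /\ length p > 1 /\ x = u /\
    exists l, l <> pointer p /\ y = cls (setptr p l).

Definition Xi_pair {R : WA} (u v : point R) : Prop := inXi u u v \/ inXi v v u.

Definition base_pair {R : WA} (u v : point R) : Prop :=
  exists (t : I3 -> R) (k l : I3), inB t /\ k <> l /\
    le (t (third k l)) diff' /\ u = cls [(t, k)] /\ v = cls [(t, l)].

Definition Xi_is {R : WA} (u v w : point R) : Prop :=
  forall x y, inXi u x y <-> ((x = u /\ y = v) \/ (x = u /\ y = w)).

Definition perm3 {T : Type} (x : T * T * T) (a b c : T) : Prop :=
  x = (a, b, c) \/ x = (a, c, b) \/ x = (b, a, c) \/
  x = (b, c, a) \/ x = (c, a, b) \/ x = (c, b, a).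

(* A triple of V(B) is <(p0)^B, (p1)^B, (p2)^B> for a trail p, and by rule (1) we may
   assume that p has no backtrack; we induct on its length.  For a single vertex t the
   three classes of <t,0>, <t,1>, <t,2> are identified exactly along E, and any two
   distinct ones form a base-pair (an atom not below 1' is below 0'), giving (iii), (v)
   or (vi).  Otherwise p ends with an edge from a to t, the pointer at a being k.  By
   rule (2) the two classes with pointer l <> k are those of the shorter trail, hence
   equal, a Xi-pair or a base-pair by induction.  If t is in E_{kl} for some l <> k,
   the class with pointer k collapses onto the one with pointer l by rule (3), giving
   (iv)-(vi).  Otherwise pk is reduced, hence of minimal length in its class; as the
   other two classes contain shorter trails, (pk)^B differs from them, and Xi((pk)^B)
   consists of the pairs to those classes, giving (i), (ii) or (iv).  Classes are told
   apart by an invariant of ~: the first vertex and the freely reduced word of edges,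
   with the end of the trail normalised under rules (2) and (3), which recovers every
   reduced trail with at least one edge. *)

From Stdlib Require Import List Lia Relations.
From Stdlib Require Import ClassicalEpsilon FunctionalExtensionality PropExtensionality.
Import ListNotations.

(** * Boolean and relation-algebraic facts *)

Section Algebra.
Context {W : WA}.
Local Notation "x ⊕ y" := (@jn W x y) (at level 50, left associativity).
Local Notation "! x" := (@cm W x) (at level 35, right associativity).

Lemma jnC (x y : W) : x ⊕ y = y ⊕ x. Proof. apply wa_R1. Qed.
Lemma jnA (x y z : W) : x ⊕ (y ⊕ z) = x ⊕ y ⊕ z. Proof. apply wa_R2. Qed.
Lemma jnCA (x y z : W) : x ⊕ (y ⊕ z) = y ⊕ (x ⊕ z).
Proof. rewrite !jnA, (jnC x y). reflexivity. Qed.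
Lemma huntington (x y : W) : !(!x ⊕ y) ⊕ !(!x ⊕ !y) = x. Proof. apply wa_R3. Qed.

(* Huntington's derivation of the Boolean laws from R1-R3. *)
Lemma jnN_cmN (x : W) : x ⊕ !x = !x ⊕ !!x.
Proof.
  transitivity ((!(!x ⊕ !!x) ⊕ !(!x ⊕ !!!x)) ⊕ (!(!!x ⊕ !!x) ⊕ !(!!x ⊕ !!!x))).
  { rewrite !huntington. reflexivity. }
  transitivity ((!(!!x ⊕ !x) ⊕ !(!!x ⊕ !!x)) ⊕ (!(!!!x ⊕ !x) ⊕ !(!!!x ⊕ !!x))).
  2:{ rewrite !huntington. reflexivity. }
  rewrite (jnC (!!x) (!x)), (jnC (!!!x) (!x)), (jnC (!!!x) (!!x)).
  rewrite !jnA. f_equal. rewrite <- !jnA. f_equal. apply jnC.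
Qed.

Lemma cmK (x : W) : !!x = x.
Proof.
  transitivity (!(!!!x ⊕ !x) ⊕ !(!!!x ⊕ !!x)). { symmetry; apply huntington. }
  transitivity (!(!x ⊕ !!x) ⊕ !(!x ⊕ !!!x)). 2:{ apply huntington. }
  rewrite (jnC (!!!x) (!!x)), (jnC (!!!x) (!x)), <- (jnN_cmN (!x)). apply jnC.
Qed.

Lemma jnN (x : W) : x ⊕ !x = top.
Proof.
  enough (E : forall y : W, x ⊕ !x = y ⊕ !y) by apply E.
  intro y.
  transitivity ((!(!x ⊕ y) ⊕ !(!x ⊕ !y)) ⊕ (!(!!x ⊕ y) ⊕ !(!!x ⊕ !y))).
  { rewrite !huntington. reflexivity. }
  transitivity ((!(!y ⊕ x) ⊕ !(!y ⊕ !x)) ⊕ (!(!!y ⊕ x) ⊕ !(!!y ⊕ !x))).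
  2:{ rewrite !huntington. reflexivity. }
  rewrite !cmK, (jnC (!x) y), (jnC (!x) (!y)), (jnC x y), (jnC x (!y)).
  set (a := !(y ⊕ !x)). set (b := !(!y ⊕ !x)). set (c := !(y ⊕ x)). set (d := !(!y ⊕ x)).
  rewrite <- !jnA, (jnC c d), (jnCA b d), (jnCA a d). f_equal.
  rewrite (jnC c a), (jnCA b a). reflexivity.
Qed.

Lemma cm_bot : !(@bot W) = top. Proof. apply cmK. Qed.

Lemma bot_jn_meet (x : W) : bot ⊕ !(!x ⊕ !x) = x.
Proof. rewrite <- (huntington x x) at 3. rewrite (jnC (!x) x), jnN. reflexivity. Qed.

Lemma top_jn_top : (@top W) ⊕ top = top.
Proof.
  assert (Etop : !(top ⊕ top) ⊕ top = (@top W)).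
  { assert (Ebot : bot ⊕ !(top ⊕ top) = (@bot W)) by (rewrite <- cm_bot; apply bot_jn_meet).
    assert (Ebt : (@bot W) ⊕ top = top) by (rewrite jnC; apply jnN).
    transitivity (!(top ⊕ top) ⊕ (bot ⊕ top)); [rewrite Ebt; reflexivity|].
    rewrite jnA, (jnC _ bot), Ebot. exact Ebt. }
  pose proof (jnN (top ⊕ top)) as E.
  rewrite <- jnA, (jnC top (!(top ⊕ top))), Etop in E. exact E.
Qed.

Lemma jn_bot (x : W) : x ⊕ bot = x.
Proof.
  assert (Ebb : (@bot W) ⊕ bot = bot).
  { rewrite <- (bot_jn_meet bot) at 3. rewrite cm_bot, top_jn_top. reflexivity. }
  rewrite <- (bot_jn_meet x) at 1. rewrite (jnC bot), <- jnA, Ebb, jnC. apply bot_jn_meet.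
Qed.

Lemma jnn (x : W) : x ⊕ x = x.
Proof.
  assert (Emeet : forall y : W, !(!y ⊕ !y) = y).
  { intro y. rewrite <- (jn_bot (!(!y ⊕ !y))), jnC. apply bot_jn_meet. }
  assert (E : !(x ⊕ x) = !x) by (rewrite <- (Emeet (!x)), !cmK; reflexivity).
  rewrite <- (cmK (x ⊕ x)), E. apply cmK.
Qed.

Lemma le_refl (x : W) : le x x. Proof. apply jnn. Qed.
Lemma le_trans (x y z : W) : le x y -> le y z -> le x z.
Proof. unfold le; intros A B. rewrite <- B, jnA, A. reflexivity. Qed.
Lemma le_antisym (x y : W) : le x y -> le y x -> x = y.
Proof. unfold le; intros A B. rewrite <- A, <- B at 1. apply jnC. Qed.
Lemma bot_le (x : W) : le bot x. Proof. unfold le. rewrite jnC. apply jn_bot. Qed.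

Definition mt (x y : W) : W := !(!x ⊕ !y).

Lemma mt_cm_jn_mt (x y : W) : mt x (!y) ⊕ mt x y = x.
Proof. unfold mt. rewrite cmK. apply huntington. Qed.
Lemma mt_le_l (x y : W) : le (mt x y) x.
Proof.
  unfold le. rewrite <- (mt_cm_jn_mt x y) at 2.
  rewrite (jnC (mt x (!y))), jnA, jnn, jnC. apply mt_cm_jn_mt.
Qed.
Lemma mt_le_r (x y : W) : le (mt x y) y.
Proof. unfold mt. rewrite jnC. apply mt_le_l. Qed.

Lemma atom_split (a x : W) : is_atom a -> le a x \/ le a (!x).
Proof.
  intros [_ Ha]. destruct (Ha (mt a x) (mt_le_l a x)) as [E|E].
  - right. rewrite <- (mt_cm_jn_mt a x), E, jn_bot. apply mt_le_r.
  - left. rewrite <- E. apply mt_le_r.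
Qed.

Lemma le_cm_bot (a : W) : le a (!a) -> a = bot.
Proof. unfold le; intro E. rewrite jnN in E. rewrite <- (cmK a), <- E. reflexivity. Qed.

Local Notation "x ; y" := (@cp W x y) (at level 40, left associativity).
Local Notation "x ^~" := (@cv W x) (at level 30).

Lemma cp_monol (x y z : W) : le x y -> le (x;z) (y;z).
Proof. unfold le; intro E. rewrite <- wa_R5, E. reflexivity. Qed.
Lemma cv_mono (x y : W) : le x y -> le (x^~) (y^~).
Proof. unfold le; intro E. rewrite <- wa_R8, E. reflexivity. Qed.
Lemma cp_monor (x y z : W) : le x y -> le (z;x) (z;y).
Proof.
  intro E. rewrite <- (wa_R7 _ (z;x)), <- (wa_R7 _ (z;y)). apply cv_mono.
  rewrite !wa_R9. apply cp_monol, cv_mono, E.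
Qed.
Lemma cv_id : (@id' W)^~ = id'.
Proof.
  rewrite <- (wa_R7 _ id') at 2. rewrite <- (wa_R6 _ (id'^~)) at 2.
  rewrite wa_R9, wa_R7, wa_R6. reflexivity.
Qed.
Lemma cv_bot : (@bot W)^~ = bot.
Proof.
  apply le_antisym; [|apply bot_le].
  rewrite <- (wa_R7 _ bot) at 2. apply cv_mono, bot_le.
Qed.
Lemma atom_cv (a : W) : is_atom a -> is_atom (a^~).
Proof.
  intros [Hne Ha]. split.
  - intro E. apply Hne. rewrite <- (wa_R7 _ a), E. apply cv_bot.
  - intros x Hx. apply cv_mono in Hx. rewrite wa_R7 in Hx.
    destruct (Ha _ Hx) as [E|E]; [left|right]; rewrite <- (wa_R7 _ x), E;
      [apply cv_bot|reflexivity].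
Qed.

Lemma schroder (x y z : W) : le z (!(x;y)) -> le (x^~;z) (!y).
Proof. intro E. eapply le_trans; [apply cp_monor, E|]. apply wa_R10. Qed.

Lemma cycle_atom_r (a b c : W) : is_atom a -> is_atom c -> le a (b;c) -> le c (b^~;a).
Proof.
  intros Ha Hc E. destruct (atom_split c (b^~;a) Hc) as [X|X]; auto.
  apply schroder in X. rewrite wa_R7 in X.
  exfalso. apply (proj1 Ha), le_cm_bot. eapply le_trans; eauto.
Qed.
Lemma cycle_atom_l (a b c : W) :
  is_atom a -> is_atom b -> is_atom c -> le a (b;c) -> le b (a;c^~).
Proof.
  intros Ha Hb Hc E. apply cv_mono in E. rewrite wa_R9 in E.
  apply cycle_atom_r in E; try apply atom_cv; auto.
  apply cv_mono in E. rewrite wa_R9, !wa_R7 in E. exact E.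
Qed.

Lemma inB_id_closed (s : I3 -> W) : inB s ->
  (le (s i2) id' -> le (s i0) id' -> le (s i1) id') /\
  (le (s i1) id' -> le (s i2) id' -> le (s i0) id') /\
  (le (s i1) id' -> le (s i0) id' -> le (s i2) id').
Proof.
  intros [Hat Hle]. split; [|split]; intros A B.
  - eapply le_trans; [exact Hle|]. eapply le_trans; [apply cp_monol, A|].
    eapply le_trans; [apply cp_monor, B|]. rewrite wa_R6. apply le_refl.
  - eapply le_trans; [apply cycle_atom_r; eauto|].
    eapply le_trans; [apply cp_monol, cv_mono, B|]. rewrite cv_id.
    eapply le_trans; [apply cp_monor, A|]. rewrite wa_R6. apply le_refl.
  - eapply le_trans; [apply cycle_atom_l; eauto|].
    eapply le_trans; [apply cp_monol, A|].
    eapply le_trans; [apply cp_monor, cv_mono, B|]. rewrite cv_id, wa_R6. apply le_refl.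
Qed.
End Algebra.

(** * Free reduction and an invariant of ~ *)

Definition decP (P : Prop) : {P} + {~ P} := excluded_middle_informative P.

Section FreeReduction.
Context {A : Type} (inv : A -> A).
Hypothesis invK : forall a, inv (inv a) = a.

Fixpoint freduced (w : list A) : Prop :=
  match w with
  | a :: ((b :: _) as w') => b <> inv a /\ freduced w'
  | _ => True
  end.

(* Stacks store a word in reverse order, the most recent letter first. *)
Definition push (a : A) (st : list A) : list A :=
  match st with
  | b :: st' => if decP (b = inv a) then st' else a :: st
  | [] => [a]
  end.

Definition redf (st w : list A) : list A := fold_left (fun s a => push a s) w st.
Definition red (w : list A) : list A := redf [] w.

Lemma freduced_tail a w : freduced (a :: w) -> freduced w.
Proof. destruct w; simpl; tauto. Qed.

Lemma push_freduced a st : freduced st -> freduced (push a st).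
Proof.
  destruct st as [|b st]; simpl; auto. intro Hst.
  destruct (decP (b = inv a)); [eapply freduced_tail; eauto|simpl; auto].
Qed.

Lemma redf_freduced st w : freduced st -> freduced (redf st w).
Proof. revert st; induction w; simpl; auto using push_freduced. Qed.

Lemma push_inv_push a st : freduced st -> push (inv a) (push a st) = st.
Proof.
  destruct st as [|b st]; simpl.
  - intros _. destruct (decP (a = inv (inv a))) as [_|X]; [reflexivity|]. now rewrite invK in X.
  - intro Hst. destruct (decP (b = inv a)) as [->|Hb].
    + destruct st as [|c st]; simpl; [destruct (decP (inv a = a)); congruence|].
      destruct (decP (c = inv (inv a))) as [Hc|]; [|reflexivity].
      rewrite invK in Hc. subst c. exfalso. apply (proj1 Hst). now rewrite invK.
    + simpl. destruct (decP (a = inv (inv a))) as [_|X]; [reflexivity|]. now rewrite invK in X.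
Qed.

Lemma red_cancel w1 a w2 : red (w1 ++ a :: inv a :: w2) = red (w1 ++ w2).
Proof.
  unfold red, redf. rewrite !fold_left_app. simpl.
  rewrite push_inv_push; [reflexivity|]. apply (redf_freduced [] w1). exact I.
Qed.

Lemma red_snoc w a : red (w ++ [a]) = push a (red w).
Proof. unfold red, redf. rewrite fold_left_app. reflexivity. Qed.

Lemma redf_freduced_word a st w : freduced (a :: w) -> redf (a :: st) w = rev w ++ a :: st.
Proof.
  revert a st; induction w as [|b w IH]; intros a st Hw; simpl; auto.
  destruct Hw as [Hb Hw]. destruct (decP (a = inv b)) as [X|_].
  - exfalso. apply Hb. now rewrite X, invK.
  - rewrite IH by exact Hw. now rewrite <- app_assoc.
Qed.

Lemma red_freduced w : freduced w -> red w = rev w.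
Proof. destruct w as [|a w]; [reflexivity|]. apply redf_freduced_word. Qed.

Lemma push_length a st : length (push a st) <= S (length st).
Proof. destruct st; simpl; auto. destruct decP; simpl; lia. Qed.

Lemma red_length w : length (red w) <= length w.
Proof.
  enough (H : forall st, length (redf st w) <= length st + length w) by apply (H []).
  induction w as [|a w IH]; intro st; simpl; [lia|].
  specialize (IH (push a st)). pose proof (push_length a st). unfold redf in *. lia.
Qed.
End FreeReduction.

Definition I3_dec (a b : I3) : {a = b} + {a <> b}. Proof. decide equality. Defined.

Lemma third_sym k l : third k l = third l k. Proof. destruct k, l; reflexivity. Qed.
Lemma third_uniq k l m : k <> l -> k <> m -> l <> m -> third k l = m.
Proof. destruct k, l, m; simpl; congruence. Qed.
Lemma third_neq_l k l : k <> l -> third k l <> k. Proof. destruct k, l; simpl; congruence. Qed.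
Lemma third_neq_r k l : k <> l -> third k l <> l. Proof. destruct k, l; simpl; congruence. Qed.

Definition next (k : I3) : I3 := match k with i0 => i1 | i1 => i2 | i2 => i0 end.
Lemma next_neq k : next k <> k. Proof. destruct k; discriminate. Qed.
Lemma neq_next_third k l : l <> k -> l = next k \/ l = third k (next k).
Proof. destruct k, l; simpl; intuition congruence. Qed.

Section ERelation.
Context {R : WA}.
Local Notation V := (I3 -> R).

Lemma Erel_refl (s : V) k : inB s -> Erel k k s.
Proof. split; auto. Qed.
Lemma Erel_sym (s : V) k l : Erel k l s -> Erel l k s.
Proof. intros [H [A|[B C]]]; split; auto. right. rewrite third_sym. split; auto. Qed.
Lemma Erel_trans (s : V) k l m : Erel k l s -> Erel l m s -> Erel k m s.
Proof.
  intros [Hs A] [_ B]. split; auto.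
  pose proof (inB_id_closed s Hs) as (S1 & S2 & S3).
  destruct A as [A|[An A]]; [subst; auto|].
  destruct B as [B|[Bn B]]; [subst; right; auto|].
  destruct k, l, m; simpl in *; try congruence; try (left; reflexivity);
    right; split; try congruence; auto.
Qed.

(* E_{lk} only looks at side third l k, which T_c preserves when c = third l k. *)
Lemma Erel_Trel (u t : V) c l k :
  Trel c u t -> inB u -> Erel l k t -> l <> c -> k <> c -> Erel l k u.
Proof.
  intros Ht Hu [_ [A|[An A]]] Hl Hk; split; auto. right. split; auto.
  rewrite (third_uniq l k c) in * by auto. unfold Trel in Ht. rewrite Ht. exact A.
Qed.

Definition Eother (s : V) (k : I3) : option I3 :=
  if decP (Erel k (next k) s) then Some (next k)
  else if decP (Erel k (next (next k)) s) then Some (next (next k)) else None.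

Lemma Eother_Some (s : V) k l : Eother s k = Some l -> l <> k /\ Erel k l s.
Proof.
  unfold Eother. destruct (decP _) as [A|A]; [|destruct (decP _) as [B|B]]; intro X;
    inversion X; subst; split; auto; destruct k; discriminate.
Qed.

Lemma Eother_None (s : V) k l : Eother s k = None -> Erel k l s -> l = k.
Proof.
  unfold Eother. destruct (decP _) as [A|A]; [discriminate|].
  destruct (decP _) as [B|B]; [discriminate|]. intros _ H.
  destruct k, l; simpl in *; auto; tauto.
Qed.
End ERelation.

Section Walks.
Context {R : WA}.
Local Notation V := (I3 -> R).
Local Notation E := (V * I3 * V)%type.

Definition edge_rev (e : E) : E := let '(u, l, v) := e in (v, l, u).
Lemma edge_revK e : edge_rev (edge_rev e) = e. Proof. destruct e as [[u l] v]; reflexivity. Qed.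

Fixpoint walk (a : V) (w : list E) (b : V) : Prop :=
  match w with
  | [] => a = b /\ inB a
  | (u, l, v) :: w' => a = u /\ inB u /\ Trel l u v /\ walk v w' b
  end.

Lemma walk_inB a w b : walk a w b -> inB a.
Proof. destruct w as [|[[u l] v] w]; simpl; intuition; subst; auto. Qed.

Lemma walk_app a w1 w2 b : walk a (w1 ++ w2) b <-> exists m, walk a w1 m /\ walk m w2 b.
Proof.
  revert a; induction w1 as [|[[u l] v] w1 IH]; intros a; simpl.
  - split; [intro H; exists a; split; [split; [reflexivity|eapply walk_inB; eauto]|exact H]|].
    intros [m [[-> _] H]]. exact H.
  - rewrite IH. split.
    + intros (-> & Hu & Ht & m & H1 & H2). exists m. tauto.
    + intros (m & (-> & Hu & Ht & H1) & H2). do 3 (split; [auto|]). exists m; tauto.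
Qed.

Lemma walk_push a st m l v :
  walk a (rev st) m -> Trel l m v -> inB v -> walk a (rev (push edge_rev (m, l, v) st)) v.
Proof.
  intros Hw Ht Hv. destruct st as [|f st]; simpl in *.
  - destruct Hw as [-> Hm]. simpl. tauto.
  - apply walk_app in Hw. destruct Hw as (m' & H1 & H2).
    destruct f as [[x y] z]. simpl in H2. destruct H2 as (-> & Hx & Hxz & -> & Hm).
    destruct (decP _) as [Hf|Hf].
    + simpl in Hf. inversion Hf. subst. exact H1.
    + simpl. apply walk_app. exists m. split; [apply walk_app; exists x; simpl; tauto|simpl; tauto].
Qed.

Lemma walk_red a w b : walk a w b -> walk a (rev (red edge_rev w)) b.
Proof.
  enough (H : forall st m, walk a (rev st) m -> walk m w b -> walk a (rev (redf edge_rev st w)) b).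
  { intro Hw. apply (H [] a); [split; [reflexivity|eapply walk_inB; eauto]|exact Hw]. }
  induction w as [|[[u l] v] w IH]; intros st m H1 H2; simpl in *.
  - destruct H2 as [-> _]; exact H1.
  - destruct H2 as (-> & Hu & Ht & H2). apply (IH _ v); auto.
    apply walk_push; auto. eapply walk_inB; eauto.
Qed.

(* Rules (2) and (3) of ~, applied at the end of the trail as long as possible.  On a
   trail without edges the pointer is reset to 0: one-vertex trails need not be told
   apart. *)
Fixpoint tail_nf (a : V) (st : list E) (k : I3) : V * list E * I3 :=
  match st with
  | [] => (a, [], i0)
  | (u, c, v) :: st' =>
      if I3_dec c k then
        match Eother v k with
        | Some l => tail_nf a st' l
        | None => (a, st, k)
        end
      else tail_nf a st' k
  end.

Lemma tail_nf_length a st k : length (snd (fst (tail_nf a st k))) <= length st.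
Proof.
  revert k; induction st as [|[[u c] v] st IH]; intro k; simpl; auto.
  destruct (I3_dec c k); [destruct (Eother v k)|]; simpl;
    [specialize (IH i)|lia|specialize (IH k)]; lia.
Qed.

Lemma tail_nf_push_neq a st (t : V) l (s : V) k : l <> k ->
  tail_nf a (push edge_rev (t, l, s) st) k = tail_nf a st k.
Proof.
  intro H. destruct st as [|f st]; simpl.
  - destruct (I3_dec l k); [congruence|reflexivity].
  - destruct (decP _) as [->|Hf]; simpl; destruct (I3_dec l k); try congruence; reflexivity.
Qed.

Lemma tail_nf_Erel a st : forall t l k,
  walk a (rev st) t -> Erel l k t -> tail_nf a st l = tail_nf a st k.
Proof.
  induction st as [|[[u c] v] st IH]; intros t l k Hw Hlk.
  - reflexivity.
  - simpl in Hw. apply walk_app in Hw. destruct Hw as (m & H1 & H2).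
    simpl in H2. destruct H2 as (-> & Hu & Ht & -> & _).
    simpl. destruct (I3_dec c l) as [<-|Cl], (I3_dec c k) as [Ck|Ck].
    + now subst.
    + destruct (Eother t c) as [x|] eqn:P.
      * apply Eother_Some in P. destruct P as [Px Pe].
        destruct (I3_dec x k) as [->|Xk]; [reflexivity|].
        apply (IH u); auto. apply (Erel_Trel u t c); auto.
        eapply Erel_trans; [apply Erel_sym, Pe|exact Hlk].
      * exfalso. apply Ck. symmetry. exact (Eother_None _ _ _ P Hlk).
    + subst c. destruct (Eother t k) as [x|] eqn:P.
      * apply Eother_Some in P. destruct P as [Px Pe].
        destruct (I3_dec x l) as [->|Xl]; [reflexivity|].
        apply (IH u); auto. apply (Erel_Trel u t k); auto.
        eapply Erel_trans; [exact Hlk|exact Pe].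
      * exfalso. apply Cl. symmetry. exact (Eother_None _ _ _ P (Erel_sym _ _ _ Hlk)).
    + apply (IH u); auto. apply (Erel_Trel u t c); auto.
Qed.
End Walks.

Section Trails.
Context {R : WA}.
Local Notation V := (I3 -> R).
Local Notation E := (V * I3 * V)%type.
Local Notation T := (trail R).

Fixpoint valid (p : T) : Prop :=
  match p with
  | [] => False
  | [(t, _)] => inB t
  | (t, k) :: (((s, _) :: _) as p') => inB t /\ t <> s /\ Trel k t s /\ valid p'
  end.

Fixpoint edges (p : T) : list E :=
  match p with
  | (t, k) :: (((s, _) :: _) as p') => (t, k, s) :: edges p'
  | _ => []
  end.

Definition start (p : T) : V := fst (hd dflt p).
Definition lastv (p : T) : V := fst (last p dflt).
Definition ptr (p : T) : I3 := snd (last p dflt).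

Fixpoint no_backtrack (p : T) : Prop :=
  match p with
  | (t, l) :: (((s, l') :: (t', _) :: _) as p') => (t <> t' \/ l <> l') /\ no_backtrack p'
  | _ => True
  end.

Lemma valid_cons (x y : V * I3) (r : T) : valid (x :: y :: r) <->
  inB (fst x) /\ fst x <> fst y /\ Trel (snd x) (fst x) (fst y) /\ valid (y :: r).
Proof. destruct x as [t k], y as [s m]; simpl. tauto. Qed.

Lemma is_trail_valid (p : T) : is_trail p <-> valid p.
Proof.
  induction p as [|x p IH].
  - split; [intros [H _]; congruence|simpl; tauto].
  - destruct p as [|y p].
    + destruct x as [t k]. unfold is_trail, tr, pt; simpl. split.
      * intros (_ & H & _). apply (H 0); lia.
      * intros H. split; [congruence|]. split.
        -- intros [|i] Hi; [exact H|simpl in Hi; lia].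
        -- intros i Hi. simpl in Hi; lia.
    + rewrite valid_cons, <- IH. unfold is_trail, tr, pt. simpl. split.
      * intros (_ & H1 & H2). split; [apply (H1 0); lia|].
        destruct (H2 0 ltac:(lia)) as [A B]. split; [exact A|]. split; [exact B|].
        split; [congruence|]. split.
        -- intros i Hi. apply (H1 (S i)). simpl. lia.
        -- intros i Hi. apply (H2 (S i)). simpl in *. lia.
      * intros (A & B & C & _ & D1 & D2). split; [congruence|]. split.
        -- intros [|i] Hi; [exact A|apply D1; simpl in *; lia].
        -- intros [|i] Hi; [split; auto|apply D2; simpl in *; lia].
Qed.

Lemma valid_walk (p : T) : valid p -> walk (start p) (edges p) (lastv p).
Proof.
  induction p as [|[t k] p IH]; simpl; [tauto|].
  destruct p as [|[s m] p].
  - unfold start, lastv; simpl. auto.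
  - intros (A & B & C & D). specialize (IH D). unfold start, lastv in *. simpl in *. auto.
Qed.

Lemma no_backtrack_iff (p : T) : no_backtrack p <->
  forall i, i + 2 < length p -> tr p i <> tr p (i + 2) \/ pt p i <> pt p (i + 1).
Proof.
  induction p as [|[t l] [|[s l'] [|[t' k] p]] IH];
    try (simpl; split; auto; intros _ i Hi; simpl in Hi; lia).
  change (no_backtrack ((t, l) :: (s, l') :: (t', k) :: p)) with
    ((t <> t' \/ l <> l') /\ no_backtrack ((s, l') :: (t', k) :: p)).
  rewrite IH. unfold tr, pt. split.
  - intros [A B] [|i] Hi; [exact A|apply (B i); simpl in *; lia].
  - intros H. split; [exact (H 0 ltac:(simpl; lia))|].
    intros i Hi. apply (H (S i)). simpl in *; lia.
Qed.

Lemma no_backtrack_freduced (p : T) : no_backtrack p -> freduced edge_rev (edges p).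
Proof.
  induction p as [|[t l] [|[s l'] [|[t' k] p]] IH]; simpl; auto.
  intros [A B]. specialize (IH B). simpl in IH. split; auto.
  intro X. inversion X; subst. destruct A; auto.
Qed.

Lemma backtrack_split (p : T) : ~ no_backtrack p ->
  exists pre t l s k post, p = pre ++ (t, l) :: (s, l) :: (t, k) :: post.
Proof.
  induction p as [|[t l] [|[s l'] [|[t' k] p]] IH]; simpl; try tauto.
  intro H. destruct (decP (t = t' /\ l = l')) as [[-> ->]|A].
  - exists [], t', l', s, k, p. reflexivity.
  - destruct IH as (pre & a & b & c & d & post & E).
    { intro B. apply H. split; [|exact B]. destruct (decP (t = t')); tauto. }
    exists ((t, l) :: pre), a, b, c, d, post. rewrite E. reflexivity.
Qed.

Lemma setptr_cons2 (x y : V * I3) (r : T) l : setptr (x :: y :: r) l = x :: setptr (y :: r) l.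
Proof. destruct x; reflexivity. Qed.

Lemma setptr_app (x y : T) l : y <> [] -> setptr (x ++ y) l = x ++ setptr y l.
Proof.
  intro Hy. induction x as [|a x IH]; simpl; auto.
  destruct (x ++ y) eqn:X; [destruct x, y; simpl in X; congruence|].
  rewrite <- X, <- IH, X. apply setptr_cons2.
Qed.

Lemma setptr_last (pre : T) (t : V) k l : setptr (pre ++ [(t, k)]) l = pre ++ [(t, l)].
Proof. rewrite setptr_app by congruence. reflexivity. Qed.

Lemma setptr_setptr (p : T) k l : setptr (setptr p k) l = setptr p l.
Proof.
  destruct (decP (p = [])) as [->|Hp]; [reflexivity|].
  destruct (exists_last Hp) as (pre & [t m] & ->). rewrite !setptr_last. reflexivity.
Qed.

Lemma setptr_length (p : T) l : length (setptr p l) = length p.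
Proof.
  destruct (decP (p = [])) as [->|Hp]; [reflexivity|].
  destruct (exists_last Hp) as (pre & [t m] & ->). rewrite !setptr_last, !length_app. reflexivity.
Qed.

Lemma valid_setptr (p : T) l : valid p -> valid (setptr p l).
Proof.
  induction p as [|x [|y p] IH]; [simpl; tauto|destruct x; simpl; tauto|].
  rewrite setptr_cons2. destruct (setptr (y :: p) l) as [|y' p'] eqn:E.
  { destruct p; [destruct y|rewrite setptr_cons2 in E]; discriminate. }
  assert (Hy : fst y' = fst y).
  { destruct p; [destruct y|rewrite setptr_cons2 in E]; injection E; intros; subst; reflexivity. }
  rewrite !valid_cons, Hy. intros (A & B & C & D). auto.
Qed.

Lemma valid_app_l (x y : T) : x <> [] -> valid (x ++ y) -> valid x.
Proof.
  induction x as [|a [|b x] IH]; [congruence| |]; intros _.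
  - destruct y as [|c y]; cbn [app]; auto. rewrite valid_cons. destruct a; simpl; tauto.
  - cbn [app] in *. rewrite !valid_cons. intros (A & B & C & D).
    do 3 (split; [assumption|]). apply IH; [discriminate|exact D].
Qed.

Lemma valid_app_r (x y : T) : y <> [] -> valid (x ++ y) -> valid y.
Proof.
  intro Hy. induction x as [|a x IH]; [auto|]. cbn [app].
  destruct (x ++ y) as [|b r] eqn:E; [apply app_eq_nil in E; tauto|].
  rewrite valid_cons. intros (_ & _ & _ & H). apply IH, H.
Qed.

Lemma valid_backtrack (pre : T) (t : V) l (s : V) k (post : T) :
  valid (pre ++ (t, l) :: (s, l) :: (t, k) :: post) -> valid (pre ++ (t, k) :: post).
Proof.
  induction pre as [|a [|b pre] IH].
  - cbn [app]. rewrite !valid_cons. destruct post; simpl; tauto.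
  - cbn [app]. rewrite !valid_cons. simpl. tauto.
  - cbn [app] in *. rewrite !valid_cons. intros (A & B & C & D). auto.
Qed.

Lemma edges_app (pre : T) (t : V) a (r : T) :
  edges (pre ++ (t, a) :: r) = edges (pre ++ [(t, a)]) ++ edges ((t, a) :: r).
Proof.
  induction pre as [|[u m] [|[w n] pre] IH]; simpl; auto.
  simpl in IH. rewrite IH. reflexivity.
Qed.

Lemma edges_last (pre : T) (t : V) a b : edges (pre ++ [(t, a)]) = edges (pre ++ [(t, b)]).
Proof.
  induction pre as [|[u m] [|[w n] pre] IH]; simpl; auto.
  simpl in IH. rewrite IH. reflexivity.
Qed.

Lemma edges_length (p : T) : length (edges p) = pred (length p).
Proof. induction p as [|[t k] [|[s m] p] IH]; simpl in *; auto. Qed.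

Lemma last_app_neq_nil (x y : T) d : y <> [] -> last (x ++ y) d = last y d.
Proof.
  intro Hy. induction x as [|a x IH]; simpl; auto.
  rewrite IH. destruct (x ++ y) eqn:X; auto. destruct x, y; simpl in X; congruence.
Qed.

Lemma ptr_app (x y : T) : y <> [] -> ptr (x ++ y) = ptr y.
Proof. intro Hy. unfold ptr. rewrite last_app_neq_nil by exact Hy. reflexivity. Qed.

Lemma start_app (pre : T) (x y : V * I3) (r r' : T) :
  fst x = fst y -> start (pre ++ x :: r) = start (pre ++ y :: r').
Proof. destruct pre; simpl; auto. Qed.

(* An invariant of ~: rule (1) is absorbed by free reduction of the edge word,
   rules (2) and (3) by tail_nf. *)
Definition nf (p : T) : V * list E * I3 := tail_nf (start p) (red edge_rev (edges p)) (ptr p).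

Lemma nf_step (p q : T) : valid q -> step p q -> nf p = nf q.
Proof.
  intros Hq Hs. unfold nf.
  destruct Hs as [pre post t k l s|pre t l s k Hlk|pre t l k He].
  - cbn [app].
    replace (ptr (pre ++ (t, l) :: (s, l) :: (t, k) :: post)) with (ptr (pre ++ (t, k) :: post)).
    2:{ rewrite !ptr_app by discriminate. destruct post; reflexivity. }
    rewrite (start_app pre (t, l) (t, k) _ post), (edges_app pre t l), (edges_app pre t k),
      (edges_last pre t l k) by reflexivity.
    f_equal. exact (red_cancel edge_rev edge_revK _ (t, l, s) _).
  - rewrite (start_app pre (t, l) (t, k) _ []) by reflexivity.
    rewrite !ptr_app by discriminate. simpl.
    rewrite (edges_app pre t l), (edges_last pre t l k). simpl.
    rewrite red_snoc. apply tail_nf_push_neq. exact Hlk.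
  - rewrite (start_app pre (t, l) (t, k) [] []), !ptr_app, (edges_last pre t l k)
      by (reflexivity || discriminate). simpl.
    apply (tail_nf_Erel _ _ t); [|exact He].
    apply walk_red. pose proof (valid_walk _ Hq) as W.
    unfold lastv in W. rewrite last_app_neq_nil in W by congruence. exact W.
Qed.
End Trails.

Section Points.
Context {R : WA}.
Local Notation V := (I3 -> R).
Local Notation T := (trail R).

Lemma approx_refl (p : T) : is_trail p -> approx p p.
Proof. intro H. split; [exact H|split; [exact H|apply rst_refl]]. Qed.
Lemma approx_sym (p q : T) : approx p q -> approx q p.
Proof. intros (A & B & C). split; [exact B|split; [exact A|apply rst_sym, C]]. Qed.
Lemma approx_trans (p q r : T) : approx p q -> approx q r -> approx p r.
Proof.
  intros (A & B & C) (D & F & G). split; [exact A|split; [exact F|eapply rst_trans; eauto]].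
Qed.

Lemma step_approx (p q : T) : valid p -> valid q -> step p q -> approx p q.
Proof.
  intros A B C. rewrite <- is_trail_valid in A, B.
  split; [exact A|split; [exact B|apply rst_step; split; auto]].
Qed.

Lemma approx_nf (p q : T) : approx p q -> nf p = nf q.
Proof.
  intros (_ & _ & H). induction H as [p q (_ & B & C)| | |]; auto; [|congruence].
  apply nf_step; [apply is_trail_valid|]; assumption.
Qed.

Lemma cls_eq (p q : T) : approx p q -> cls p = cls q.
Proof.
  intro H. apply functional_extensionality. intro r. apply propositional_extensionality.
  unfold cls. split; intro X; eapply approx_trans; eauto using approx_sym.
Qed.

Lemma cls_inv (p q : T) : is_trail p -> cls p = cls q -> approx q p.
Proof. intros H E. assert (X : cls p p) by (apply approx_refl; auto). rewrite E in X. exact X. Qed.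

Lemma cls_step (p q : T) : valid p -> valid q -> step p q -> cls p = cls q.
Proof. intros. apply cls_eq, step_approx; assumption. Qed.

Lemma cls_nf (p q : T) : is_trail p -> cls p = cls q -> nf p = nf q.
Proof. intros H E. symmetry. apply approx_nf, cls_inv; assumption. Qed.

Lemma pointer_ptr (p : T) : p <> [] -> pointer p = ptr p.
Proof.
  intro Hp. destruct (exists_last Hp) as (pre & x & ->). rewrite ptr_app by discriminate.
  unfold pointer, pt. rewrite length_app. simpl.
  replace (pred (length pre + 1)) with (length pre) by lia.
  rewrite nth_middle. reflexivity.
Qed.

Lemma split_last2 (p : T) : 2 <= length p -> exists pre x y, p = pre ++ [x; y].
Proof.
  intro H. destruct (exists_last (l := p)) as (p1 & y & ->); [intros ->; simpl in H; lia|].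
  destruct (exists_last (l := p1)) as (pre & x & ->); [intros ->; simpl in H; lia|].
  exists pre, x, y. rewrite <- app_assoc. reflexivity.
Qed.

Lemma reduced_last2 (pre : T) (a : V) k' (t : V) k : reduced (pre ++ [(a, k'); (t, k)]) ->
  k' = k /\ forall l, Erel k l t -> k = l.
Proof.
  intros (_ & _ & Hb & _). destruct Hb as [B1 B2]; [rewrite length_app; simpl; lia|].
  rewrite length_app in B1, B2. simpl in B1, B2.
  replace (length pre + 2 - 2) with (length pre) in B1 by lia.
  replace (length pre + 2 - 1) with (S (length pre)) in B1, B2 by lia.
  unfold pt, tr in B1, B2. rewrite nth_middle in B1.
  rewrite app_nth2 in B1, B2 by lia.
  replace (S (length pre) - length pre) with 1 in B1, B2 by lia. simpl in B1, B2.
  split; [exact B1|]. intro l. apply B2.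
Qed.

Lemma nf_reduced (q : T) : reduced q -> length q > 1 -> nf q = (start q, rev (edges q), ptr q).
Proof.
  intros Hq Hl. pose proof Hq as (_ & _ & _ & Hc).
  rewrite <- no_backtrack_iff in Hc. apply no_backtrack_freduced in Hc.
  unfold nf. rewrite (red_freduced _ edge_revK _ Hc).
  destruct (split_last2 q) as (pre & [a k'] & [t k] & ->); [lia|].
  destruct (reduced_last2 _ _ _ _ _ Hq) as [-> Hend].
  rewrite (edges_app pre a k), rev_app_distr. simpl.
  replace (ptr (pre ++ [(a, k); (t, k)])) with k
    by (rewrite ptr_app by discriminate; reflexivity).
  destruct (I3_dec k k); [|congruence].
  destruct (Eother t k) as [x|] eqn:P; [|reflexivity].
  apply Eother_Some in P. destruct P as [P1 P2]. apply Hend in P2. congruence.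
Qed.

Lemma trail_ext (p q : T) : p <> [] -> q <> [] ->
  start p = start q -> edges p = edges q -> ptr p = ptr q -> p = q.
Proof.
  revert q. induction p as [|[t k] p IH]; intros q Hp Hq S Ed P; [congruence|].
  destruct q as [|[t' k'] q]; [congruence|]. unfold start in S; simpl in S. subst t'.
  destruct p as [|[s m] p], q as [|[s' m'] q]; simpl in Ed; try discriminate.
  - unfold ptr in P. simpl in P. congruence.
  - inversion Ed; subst. f_equal. apply IH; try congruence; auto.
Qed.

Lemma no_backtrack_last (pre : T) (t : V) k l :
  no_backtrack (pre ++ [(t, k)]) -> no_backtrack (pre ++ [(t, l)]).
Proof.
  induction pre as [|[x1 x2] [|[y1 y2] [|[z1 z2] pre]] IH]; [simpl; auto..|].
  cbn [app] in *. intros [A B]. split; [exact A|apply IH, B].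
Qed.

Lemma reduced_snoc2 (pre : T) (a : V) k (t : V) :
  valid (pre ++ [(a, k); (t, k)]) -> no_backtrack (pre ++ [(a, k); (t, k)]) ->
  (forall l, Erel k l t -> k = l) -> reduced (pre ++ [(a, k); (t, k)]).
Proof.
  intros Hv Hn He. split; [apply is_trail_valid, Hv|]. split; [rewrite length_app; simpl; lia|].
  split; [|apply no_backtrack_iff, Hn].
  intros _. rewrite length_app. simpl.
  replace (length pre + 2 - 2) with (length pre) by lia.
  replace (length pre + 2 - 1) with (S (length pre)) by lia.
  unfold pt, tr. rewrite nth_middle, app_nth2 by lia.
  replace (S (length pre) - length pre) with 1 by lia. simpl.
  split; [reflexivity|]. intro l. split; [auto|]. intros <-. apply Erel_refl.
  apply valid_app_r in Hv; [|discriminate]. simpl in Hv. tauto.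
Qed.

Lemma cls_reduced_length (q q' : T) : reduced q -> length q > 1 -> is_trail q' ->
  cls q = cls q' -> length q <= length q'.
Proof.
  intros Hq Hl Hq' E. apply cls_nf in E; [|apply Hq].
  apply (f_equal (fun n => length (snd (fst n)))) in E.
  rewrite nf_reduced in E by assumption. simpl in E. unfold nf in E.
  pose proof (tail_nf_length (start q') (red edge_rev (edges q')) (ptr q')).
  pose proof (red_length edge_rev (edges q')).
  rewrite length_rev, !edges_length in *. lia.
Qed.

Lemma cls_reduced_inj (q q' : T) : reduced q -> reduced q' -> length q > 1 -> length q' > 1 ->
  cls q = cls q' -> q = q'.
Proof.
  intros Hq Hq' Hl Hl' E. apply cls_nf in E; [|apply Hq].
  rewrite !nf_reduced in E by assumption. injection E as Es Ee Ep.
  apply trail_ext; auto; [intros ->; simpl in Hl; lia|intros ->; simpl in Hl'; lia|].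
  rewrite <- (rev_involutive (edges q)), Ee. apply rev_involutive.
Qed.

Lemma Xi_is_reduced (r : T) : reduced r -> length r > 1 ->
  Xi_is (cls r) (cls (setptr r (next (pointer r))))
    (cls (setptr r (third (pointer r) (next (pointer r))))).
Proof.
  intros Hr Hl x y. split.
  - intros (q & Hq & E & Hql & -> & l & Hlq & ->).
    apply cls_reduced_inj in E; auto. subst q.
    destruct (neq_next_third _ _ Hlq) as [-> | ->]; auto.
  - intros [[-> ->]|[-> ->]]; exists r; (do 4 (split; [auto|])).
    + exists (next (pointer r)). split; [apply next_neq|reflexivity].
    + exists (third (pointer r) (next (pointer r))).
      split; [apply third_neq_l, not_eq_sym, next_neq|reflexivity].
Qed.
End Points.

(** * Classification of triples *)

Lemma perm3_swap12 {T : Type} (x : T * T * T) a b c : perm3 x a b c -> perm3 x b a c.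
Proof. unfold perm3. tauto. Qed.
Lemma perm3_swap23 {T : Type} (x : T * T * T) a b c : perm3 x a b c -> perm3 x a c b.
Proof. unfold perm3. tauto. Qed.

Section Classification.
Context {R : WA}.
Local Notation P := (point R).

Definition classified (x : P * P * P) : Prop :=
  exists u v w : P, inU u /\ inU v /\ inU w /\
    ( (u <> v /\ u <> w /\ v <> w /\ perm3 x u v w /\ Xi_is u v w /\ Xi_pair v w)
    \/ (u <> v /\ u <> w /\ v <> w /\ perm3 x u v w /\ Xi_is u v w /\ base_pair v w)
    \/ (u <> v /\ u <> w /\ v <> w /\ perm3 x u v w /\
       base_pair u v /\ base_pair u w /\ base_pair v w)
    \/ (u <> v /\ perm3 x u u v /\ Xi_pair u v)
    \/ (u <> v /\ perm3 x u u v /\ base_pair u v)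
    \/ x = (u, u, u) ).

Definition linked (a b : P) : Prop := a = b \/ Xi_pair a b \/ base_pair a b.

Definition linked3 (x : P * P * P) : Prop :=
  let '(a, b, c) := x in linked a b /\ linked a c /\ linked b c.

Lemma base_pair_sym (a b : P) : base_pair a b -> base_pair b a.
Proof.
  intros (t & k & l & A & B & C & D & F). exists t, l, k.
  rewrite third_sym. auto.
Qed.

Lemma linked_sym (a b : P) : linked a b -> linked b a.
Proof. unfold linked, Xi_pair. intuition auto using base_pair_sym. Qed.

Lemma linked3_perm3 x (a b c : P) : perm3 x a b c -> linked3 (a, b, c) -> linked3 x.
Proof.
  intros Hp (G1 & G2 & G3).
  destruct Hp as [->|[->|[->|[->|[->| ->]]]]]; simpl; auto 6 using linked_sym.
Qed.

Lemma Xi_is_linked (u v w : P) : Xi_is u v w -> linked u v /\ linked u w.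
Proof.
  intro H. split; right; left; left; apply H; auto.
Qed.

Lemma classified_linked3 x : classified x -> linked3 x.
Proof.
  intros (u & v & w & _ & _ & _ & H).
  destruct H as [H|[H|[H|[H|[H| ->]]]]];
    [destruct H as (_ & _ & _ & Pm & Xi & L); apply Xi_is_linked in Xi
    |destruct H as (_ & _ & _ & Pm & Xi & L); apply Xi_is_linked in Xi
    |destruct H as (_ & _ & _ & Pm & L1 & L2 & L3)
    |destruct H as (_ & Pm & L)
    |destruct H as (_ & Pm & L)
    |simpl; unfold linked; auto];
    apply (linked3_perm3 _ _ _ _ Pm); simpl; unfold linked in *; tauto.
Qed.

Lemma classified_pair x (a b : P) : inU a -> inU b -> perm3 x a a b -> linked a b -> classified x.
Proof.
  intros Ha Hb Pm L. exists a, b, a. do 3 (split; [auto|]).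
  destruct (decP (a = b)) as [<-|Hab].
  - do 5 right. unfold perm3 in Pm. tauto.
  - destruct L as [|[L|L]]; [contradiction| |]; [do 3 right; left|do 4 right; left]; auto.
Qed.

Lemma classified_Xi x (u v w : P) : inU u -> inU v -> inU w -> u <> v -> u <> w ->
  perm3 x u v w -> Xi_is u v w -> linked v w -> classified x.
Proof.
  intros Hu Hv Hw Huv Huw Pm Xi L. destruct (decP (v = w)) as [<-|Hvw].
  - apply (classified_pair _ v u); auto.
    + apply perm3_swap12, perm3_swap23, perm3_swap12, Pm.
    + apply linked_sym, Xi_is_linked with (w := v), Xi.
  - exists u, v, w. do 3 (split; [auto|]).
    destruct L as [|[L|L]]; [contradiction|left|right; left]; auto 7.
Qed.

Lemma classified_base (a b c : P) : inU a -> inU b -> inU c ->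
  (a <> b -> base_pair a b) -> (a <> c -> base_pair a c) -> (b <> c -> base_pair b c) ->
  classified (a, b, c).
Proof.
  intros Ha Hb Hc Bab Bac Bbc.
  assert (Lk : forall x y : P, (x <> y -> base_pair x y) -> linked x y).
  { intros x y B. destruct (decP (x = y)); [left|right; right; apply B]; auto. }
  destruct (decP (a = b)) as [<-|Hab]; [apply (classified_pair _ a c); unfold perm3; auto|].
  destruct (decP (a = c)) as [<-|Hac];
    [apply (classified_pair _ a b); unfold perm3; auto|].
  destruct (decP (b = c)) as [<-|Hbc].
  - apply (classified_pair _ b a); unfold perm3; auto 7.
    apply linked_sym, Lk, Bab.
  - exists a, b, c. do 3 (split; [auto|]). do 2 right; left. unfold perm3; auto 10.
Qed.
End Classification.

Section Triples.
Context {R : WA}.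
Local Notation V := (I3 -> R).
Local Notation T := (trail R).

Definition pcls (p : T) (j : I3) : point R := cls (setptr p j).
Definition triple (p : T) : point R * point R * point R := (pcls p i0, pcls p i1, pcls p i2).

Lemma pcls_inU (p : T) j : valid p -> inU (pcls p j).
Proof.
  intro H. exists (setptr p j). split; [apply is_trail_valid, valid_setptr, H|reflexivity].
Qed.

Lemma perm3_triple (p : T) k l :
  k <> l -> perm3 (triple p) (pcls p k) (pcls p l) (pcls p (third k l)).
Proof. unfold perm3, triple. destruct k, l; simpl; intro H; try congruence; tauto. Qed.

Lemma linked3_triple (p : T) k l : linked3 (triple p) -> k <> l -> linked (pcls p k) (pcls p l).
Proof.
  unfold triple. simpl. intros (A & B & C) H. destruct k, l; try congruence; auto using linked_sym.
Qed.

Lemma triple_backtrack (pre : T) (t : V) l (s : V) k (post : T) :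
  valid (pre ++ (t, l) :: (s, l) :: (t, k) :: post) ->
  triple (pre ++ (t, l) :: (s, l) :: (t, k) :: post) = triple (pre ++ (t, k) :: post).
Proof.
  intro H.
  assert (E : forall j,
    pcls (pre ++ (t, l) :: (s, l) :: (t, k) :: post) j = pcls (pre ++ (t, k) :: post) j).
  { intro j. apply cls_step; [apply valid_setptr, H|apply valid_setptr; eapply valid_backtrack, H|].
    rewrite !setptr_app, !setptr_cons2 by discriminate.
    destruct post as [|y post]; [apply (step1 pre [])|rewrite setptr_cons2; apply step1]. }
  unfold triple. rewrite !E. reflexivity.
Qed.

Lemma classified_single (t : V) k : inB t -> classified (triple [(t, k)]).
Proof.
  intro Ht. assert (Hv : valid [(t, k)]) by exact Ht.
  assert (B : forall i j, pcls [(t, k)] i <> pcls [(t, k)] j ->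
    base_pair (pcls [(t, k)] i) (pcls [(t, k)] j)).
  { intros i j Hij. exists t, i, j. split; [exact Ht|].
    assert (He : ~ Erel i j t).
    { intro He. apply Hij, cls_step; [exact Ht|exact Ht|exact (step3 [] t i j He)]. }
    split; [intros ->; apply He, Erel_refl, Ht|].
    split; [|split; reflexivity].
    destruct (atom_split (t (third i j)) id' (proj1 Ht _)) as [A|A]; [|exact A].
    exfalso. apply He. split; [exact Ht|right; split; auto]. intros ->. apply Hij. reflexivity. }
  apply classified_base; auto using pcls_inU.
Qed.
End Triples.

Section Extension.
Context {R : WA}.
Local Notation V := (I3 -> R).
Local Notation T := (trail R).
Variables (pre : T) (a : V) (k : I3) (t : V) (m : I3).
Local Notation p := (pre ++ [(a, k); (t, m)]).
Local Notation p' := (pre ++ [(a, k)]).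
Hypothesis Hv : valid p.

Lemma valid_prefix : valid p'.
Proof.
  apply (valid_app_l _ [(t, m)]); [destruct pre; discriminate|]. rewrite <- app_assoc. exact Hv.
Qed.

Lemma pcls_ext_neq j : j <> k -> pcls p j = pcls p' j.
Proof.
  intro Hj. apply cls_step; [apply valid_setptr, Hv|apply valid_setptr, valid_prefix|].
  rewrite setptr_app, setptr_last by discriminate. exact (step2 pre a k t j (not_eq_sym Hj)).
Qed.

Hypothesis IH : linked3 (triple p').

Lemma linked_ext j j' : j <> k -> j' <> k -> j <> j' -> linked (pcls p j) (pcls p j').
Proof. intros. rewrite !pcls_ext_neq by assumption. apply linked3_triple; assumption. Qed.

Lemma classified_ext_absorbed l : l <> k -> Erel k l t -> classified (triple p).
Proof.
  intros Hlk He.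
  assert (Ekl : pcls p k = pcls p l).
  { apply cls_step; try apply valid_setptr, Hv.
    rewrite !setptr_app by discriminate. simpl.
    pose proof (step3 p' t k l He) as S. rewrite <- !app_assoc in S. exact S. }
  apply (classified_pair _ (pcls p l) (pcls p (third k l))); try apply pcls_inU, Hv.
  - rewrite <- Ekl at 1. apply perm3_triple; auto.
  - apply linked_ext; auto using third_neq_l, not_eq_sym, third_neq_r.
Qed.

Hypothesis Hn : no_backtrack p.

Lemma classified_ext_new : (forall l, Erel k l t -> k = l) -> classified (triple p).
Proof.
  intro HE.
  assert (Ek : setptr p k = pre ++ [(a, k); (t, k)])
    by (rewrite setptr_app by discriminate; reflexivity).
  assert (Hr : reduced (setptr p k)).
  { rewrite Ek. apply reduced_snoc2; auto.
    - rewrite <- Ek. apply valid_setptr, Hv.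
    - change (pre ++ [(a, k); (t, k)]) with (pre ++ [(a, k)] ++ [(t, k)]).
      change p with (pre ++ [(a, k)] ++ [(t, m)]) in Hn.
      rewrite app_assoc in *. apply (no_backtrack_last _ t m k), Hn. }
  assert (Hl : length (setptr p k) > 1) by (rewrite Ek, length_app; simpl; lia).
  assert (Hk : pointer (setptr p k) = k).
  { rewrite pointer_ptr, Ek, ptr_app;
      [reflexivity|discriminate|rewrite Ek; destruct pre; discriminate]. }
  assert (Hneq : forall j, j <> k -> pcls p k <> pcls p j).
  { intros j Hj E. rewrite (pcls_ext_neq _ Hj) in E.
    apply cls_reduced_length in E; auto; [|apply is_trail_valid, valid_setptr, valid_prefix].
    rewrite Ek, setptr_length, !length_app in E. simpl in E. lia. }
  pose proof (Xi_is_reduced _ Hr Hl) as Xi. rewrite Hk, !setptr_setptr in Xi.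
  pose proof (next_neq k) as Hnk.
  apply (classified_Xi _ _ _ _ (pcls_inU _ _ Hv) (pcls_inU _ _ Hv) (pcls_inU _ _ Hv)
    (Hneq _ Hnk) (Hneq _ (third_neq_l _ _ (not_eq_sym Hnk)))
    (perm3_triple _ _ _ (not_eq_sym Hnk)) Xi).
  apply linked_ext; auto using not_eq_sym, third_neq_l, third_neq_r.
Qed.
End Extension.

Lemma classified_triple {R : WA} n :
  forall p : trail R, length p <= n -> valid p -> classified (triple p).
Proof.
  induction n as [|n IH]; intros p Hl Hv; [destruct p; simpl in *; [contradiction|lia]|].
  destruct (decP (no_backtrack p)) as [Hn|Hn].
  2:{ destruct (backtrack_split p Hn) as (pre & t & l & s & k & post & ->).
      rewrite triple_backtrack by exact Hv. apply IH; [|eapply valid_backtrack, Hv].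
      rewrite !length_app in *. simpl in *. lia. }
  destruct p as [|[t k] [|y p]]; [contradiction|apply classified_single, Hv|].
  destruct (split_last2 ((t, k) :: y :: p)) as (pre & [a k'] & [t' m] & Ep); [simpl; lia|].
  rewrite Ep in *. clear t k y p Ep.
  assert (IH' : linked3 (triple (pre ++ [(a, k')]))).
  { apply classified_linked3, IH; [|exact (valid_prefix _ _ _ _ _ Hv)].
    rewrite !length_app in *. simpl in *. lia. }
  destruct (decP (exists l, l <> k' /\ Erel k' l t')) as [(l & Hlk & He)|HE].
  - exact (classified_ext_absorbed _ _ _ _ _ Hv IH' l Hlk He).
  - apply classified_ext_new; auto. intros l He.
    destruct (I3_dec k' l); [assumption|]. exfalso. apply HE. exists l. auto.
Qed.

Theorem lemma9 (R : CAWA) (x : point R * point R * point R) :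
  inV x ->
  exists u v w : point R, inU u /\ inU v /\ inU w /\
    ( (* (i) *)
      (u <> v /\ u <> w /\ v <> w /\ perm3 x u v w /\ Xi_is u v w /\ Xi_pair v w)
    \/ (* (ii) *)
      (u <> v /\ u <> w /\ v <> w /\ perm3 x u v w /\ Xi_is u v w /\ base_pair v w)
    \/ (* (iii) *)
      (u <> v /\ u <> w /\ v <> w /\ perm3 x u v w /\
       base_pair u v /\ base_pair u w /\ base_pair v w)
    \/ (* (iv) *)
      (u <> v /\ perm3 x u u v /\ Xi_pair u v)
    \/ (* (v) *)
      (u <> v /\ perm3 x u u v /\ base_pair u v)
    \/ (* (vi) *)
      x = (u, u, u) ).
Proof.
  intros [p [Hp ->]].
  exact (classified_triple (length p) p (le_n _) (proj1 (is_trail_valid p) Hp)).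
Qed.
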